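(* Let $X=X(\Delta)$ be a smooth complete toric variety. If $\mathcal{I}_1\ne\mathcal{I}_2$ are two centred primitive collections of $\Delta$, then $\mathcal{I}_1\cap\mathcal{I}_2=\varnothing$.
   Context: Rays of $\Delta$ are identified with their primitive generators. A primitive collection is a set $\mathcal{I}$ of rays whose members do not generate a cone of $\Delta$ while the members of each proper subset do; it is centred if $\sum_{\rho\in\mathcal{I}}\rho=0$. *)

From HB Require Import structures.
From mathcomp Require Import all_boot all_order all_algebra.
From mathcomp Require Import reals.
Set Implicit Arguments. Unset Strict Implicit. Unset Printing Implicit Defensive.
Import Order.TTheory GRing.Theory Num.Theory.
Local Open Scope ring_scope.

(* A fan Delta in N_R = R^n, N = Z^n, with m rays.  Ray i is identified with
   its primitive generator v i : 'rV[int]_n.  The cones of Delta are indexed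
   by the subsets sigma of 'I_m in S; the cone of sigma is the real cone
   generated by the v i, i \in sigma. *)

Definition realv (R : realType) n (u : 'rV[int]_n) : 'rV[R]_n :=
  map_mx (fun z : int => z%:~R) u.

Definition in_cone (R : realType) n m (v : 'I_m -> 'rV[int]_n)
    (A : {set 'I_m}) (x : 'rV[R]_n) : Prop :=
  exists c : 'I_m -> R,
    (forall i, 0 <= c i) /\ (forall i, i \notin A -> c i = 0) /\
    x = \sum_(i < m) c i *: realv R (v i).

Definition part_of_Zbasis n m (v : 'I_m -> 'rV[int]_n) (A : {set 'I_m}) : Prop :=
  exists (B : 'M[int]_n) (g : 'I_m -> 'I_n),
    B \in unitmx /\ {in A &, injective g} /\ (forall i, i \in A -> row (g i) B = v i).

Definition smooth_complete_fan (R : realType) n m (v : 'I_m -> 'rV[int]_n)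
    (S : {set {set 'I_m}}) : Prop :=
  [/\ injective v /\ (forall i, [set i] \in S), (* distinct rays, each spanning a ray of Delta *)
      (forall s t : {set 'I_m}, s \in S -> t \subset s -> t \in S),
      (forall (s t : {set 'I_m}) (x : 'rV[R]_n), s \in S -> t \in S ->             (* cones meet along common faces *)
          (in_cone v s x /\ in_cone v t x <-> in_cone v (s :&: t) x)),
      (forall s, s \in S -> part_of_Zbasis v s)
    & (forall x : 'rV[R]_n, exists2 s, s \in S & in_cone v s x) ].

Definition generates_cone (R : realType) n m (v : 'I_m -> 'rV[int]_n)
    (S : {set {set 'I_m}}) (A : {set 'I_m}) : Prop :=
  exists2 s, s \in S & forall x : 'rV[R]_n, in_cone v A x <-> in_cone v s x.

Definition primitive_collection (R : realType) n m (v : 'I_m -> 'rV[int]_n)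
    (S : {set {set 'I_m}}) (I : {set 'I_m}) : Prop :=
  ~ generates_cone R v S I /\
  (forall J : {set 'I_m}, J \proper I -> generates_cone R v S J).

Definition centred n m (v : 'I_m -> 'rV[int]_n) (I : {set 'I_m}) : Prop :=
  \sum_(i in I) v i = 0.

(* If i lies in both collections, then I1 \ {i} and I2 \ {i} generate cones
   s and t of the fan, and centredness makes both have ray sum -v i.  This
   point lies in s and in t, hence in the common face s :&: t.  The rays of a
   smooth cone are linearly independent, so the coefficients of a point of
   the cone are unique; comparing the 0/1 coefficient vectors of I1 \ {i} and
   I2 \ {i} first in s and then in t forces I1 \ {i} = I2 \ {i}. *)

From HB Require Import structures.
From mathcomp Require Import all_boot all_order all_algebra.
From mathcomp Require Import reals.
Set Implicit Arguments. Unset Strict Implicit. Unset Printing Implicit Defensive.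
Import Order.TTheory GRing.Theory Num.Theory.
Local Open Scope ring_scope.

Lemma natr_bool_inj (R : numDomainType) : injective (fun b : bool => b%:R : R).
Proof. by move=> [] [] /eqP; rewrite eqr_nat. Qed.

Lemma natr_in_notin {R : numDomainType} (T : finType) (A s : {set T}) :
  A \subset s -> forall i, i \notin s -> (i \in A)%:R = 0 :> R.
Proof. by move=> /subsetP As i /(contra (As i)) /negbTE ->. Qed.

Section SmoothFan.

Variables (R : realType) (n m : nat) (v : 'I_m -> 'rV[int]_n).

Lemma sum_realv_indicator (A : {set 'I_m}) :
  \sum_(j in A) realv R (v j) = \sum_j (j \in A)%:R *: realv R (v j).
Proof.
rewrite big_mkcond; apply: eq_bigr => j _.
by case: (j \in A); rewrite ?scale1r ?scale0r.
Qed.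

Lemma in_cone_sum (A : {set 'I_m}) : in_cone v A (\sum_(j in A) realv R (v j)).
Proof.
exists (fun j => (j \in A)%:R); split; first by move=> j; exact: ler0n.
by split; [move=> j /negbTE -> | exact: sum_realv_indicator].
Qed.

Lemma in_cone_subset (A s : {set 'I_m}) (x : 'rV[R]_n) :
  A \subset s -> in_cone v A x -> in_cone v s x.
Proof.
move=> /subsetP As [c [c_ge0 [c_A ->]]]; exists c; do !split=> //.
by move=> i /(contra (As i)); exact: c_A.
Qed.

Lemma part_of_Zbasis_free (s : {set 'I_m}) (d : 'I_m -> R) :
  part_of_Zbasis v s -> (forall i, i \notin s -> d i = 0) ->
  \sum_i d i *: realv R (v i) = 0 -> forall i, d i = 0.
Proof.
move=> [B [g [B_unit [g_inj B_g]]]] d_s d_free.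
pose BR : 'M[R]_n := map_mx (fun z : int => z%:~R) B.
have BR_unit : BR \in unitmx.
  by rewrite unitmxE det_map_mx rmorph_unit // -unitmxE.
(* e collects the coefficients by the row g i of B they multiply. *)
pose e : 'rV[R]_n := \row_k \sum_(i in s | g i == k) d i.
have eBR : e *m BR = 0.
  rewrite -d_free mulmx_sum_row.
  under eq_bigr do rewrite mxE scaler_suml.
  rewrite (exchange_big_dep xpredT) //=; apply: eq_bigr => j _.
  have [sj | /d_s ->] := boolP (j \in s); last by rewrite big1 // scale0r.
  rewrite (big_pred1 (g j)); last by move=> k /=; rewrite eq_sym.
  by rewrite /BR -map_row B_g.
have e0 : e = 0 by rewrite -(mulmxK BR_unit e) eBR mul0mx.
move=> i; have [si | /d_s //] := boolP (i \in s).
have := congr1 (fun w : 'rV[R]_n => w 0 (g i)) e0; rewrite !mxE => <-.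
rewrite (big_pred1 i) // => j /=.
by apply/andP/eqP => [[sj /eqP /g_inj] -> // | ->]; rewrite si eqxx.
Qed.

Lemma part_of_Zbasis_coef_uniq (s : {set 'I_m}) (c d : 'I_m -> R) :
  part_of_Zbasis v s ->
  (forall i, i \notin s -> c i = 0) -> (forall i, i \notin s -> d i = 0) ->
  \sum_i c i *: realv R (v i) = \sum_i d i *: realv R (v i) -> c =1 d.
Proof.
move=> s_basis c_s d_s cd i; apply/eqP; rewrite -subr_eq0; apply/eqP.
have := part_of_Zbasis_free (d := fun i => c i - d i) s_basis.
apply=> [j js|]; first by rewrite c_s ?d_s ?subrr.
by under eq_bigr do rewrite scalerBl; rewrite sumrB cd subrr.
Qed.

Variable S : {set {set 'I_m}}.
Hypothesis fanS : smooth_complete_fan R v S.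

Lemma generates_cone_subset (A s : {set 'I_m}) :
  s \in S -> (forall x : 'rV[R]_n, in_cone v A x <-> in_cone v s x) -> A \subset s.
Proof.
move=> sS cone_As; have [[_ S1] _ Sint Sb _] := fanS.
apply/subsetP => j jA; apply: contraT => js.
have vj_j : in_cone v [set j] (realv R (v j)).
  by have := in_cone_sum [set j]; rewrite big_set1.
have vj_s : in_cone v s (realv R (v j)).
  by apply/cone_As; apply: in_cone_subset vj_j; rewrite sub1set.
have [c [_ [c_sj vj_c]]] := (Sint _ _ _ sS (S1 j)).1 (conj vj_s vj_j).
have c_j : forall i, i \notin [set j] -> c i = 0.
  by move=> i ij; apply: c_sj; rewrite inE negb_and ij orbT.
have sum_eq : \sum_i (i \in [set j])%:R *: realv R (v i) = \sum_i c i *: realv R (v i).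
  by rewrite -sum_realv_indicator big_set1 -vj_c.
have := part_of_Zbasis_coef_uniq (Sb _ (S1 j)) (natr_in_notin (subxx _)) c_j sum_eq j.
by rewrite set11 c_sj ?inE ?(negbTE js) // => /eqP; rewrite oner_eq0.
Qed.

Lemma cone_subsets_sum_inj (s t A B : {set 'I_m}) :
  s \in S -> t \in S -> A \subset s -> B \subset t ->
  \sum_(j in A) v j = \sum_(j in B) v j -> A = B.
Proof.
move=> sS tS As Bt sumAB; have [_ _ Sint Sb _] := fanS.
have xB : \sum_(j in A) realv R (v j) = \sum_(j in B) realv R (v j).
  by rewrite -!raddf_sum sumAB.
have x_s := in_cone_subset As (in_cone_sum A).
have x_t := in_cone_subset Bt (in_cone_sum B); rewrite -xB in x_t.
have [c [_ [c_st x_c]]] := (Sint _ _ _ sS tS).1 (conj x_s x_t).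
have A_c : forall i, (i \in A)%:R = c i.
  apply: part_of_Zbasis_coef_uniq (Sb _ sS) (natr_in_notin As) _ _ => [i i_s|].
    by apply: c_st; rewrite inE negb_and i_s.
  by rewrite -sum_realv_indicator.
have At : A \subset t.
  apply/subsetP => i iA; apply: contraT => it.
  by have := A_c i; rewrite iA c_st ?inE ?(negbTE it) ?andbF // => /eqP; rewrite oner_eq0.
apply/setP => i; apply: natr_bool_inj; move: i.
apply: part_of_Zbasis_coef_uniq (Sb _ tS) (natr_in_notin At)
  (natr_in_notin Bt) _.
by rewrite -!sum_realv_indicator.
Qed.

End SmoothFan.

Lemma centred_sum_setD1 (n m : nat) (v : 'I_m -> 'rV[int]_n) (I : {set 'I_m}) i :
  centred v I -> i \in I -> \sum_(j in I :\ i) v j = - v i.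
Proof.
by move=> + iI; rewrite /centred (big_setD1 i) //= => /eqP; rewrite addrC addr_eq0 => /eqP.
Qed.

Theorem lemma6p4 (R : realType) (n m : nat) (v : 'I_m -> 'rV[int]_n)
    (S : {set {set 'I_m}}) (I1 I2 : {set 'I_m}) :
  smooth_complete_fan R v S ->
  primitive_collection R v S I1 -> centred v I1 ->
  primitive_collection R v S I2 -> centred v I2 ->
  I1 <> I2 -> I1 :&: I2 = set0.
Proof.
move=> fanS [_ gen1] cI1 [_ gen2] cI2 I12; apply/eqP/set0Pn => -[i].
rewrite inE => /andP [iI1 iI2]; apply: I12.
have [s sS gen_s] := gen1 _ (properD1 iI1).
have [t tS gen_t] := gen2 _ (properD1 iI2).
have D1_eq : I1 :\ i = I2 :\ i.
  apply: (cone_subsets_sum_inj fanS sS tS).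
  - exact: (generates_cone_subset fanS sS gen_s).
  - exact: (generates_cone_subset fanS tS gen_t).
  by rewrite !centred_sum_setD1.
by rewrite -(setD1K iI1) -(setD1K iI2) D1_eq.
Qed.
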